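(* Let $A,Q\in\mathbb{R}^{n\times n}$, $B,L\in\mathbb{R}^{n\times m}$, $R\in\mathbb{R}^{m\times m}$, and $A_0^i\in\mathbb{R}^{n\times n}$, $B_0^i\in\mathbb{R}^{n\times m}$ ($i=1,\dots,r$), with $R\succ0$ and $\begin{bmatrix} Q & L\\ L^{\mathsf T} & R\end{bmatrix}\succeq 0$. For symmetric $X\succeq 0$ define $$\Omega(X)=\begin{bmatrix} -G_{\mathrm c}(X) & -A_{\mathrm c}(X)\\ -[A_{\mathrm c}(X)]^{\mathsf T} & H_{\mathrm c}(X)\end{bmatrix}\in\mathbb{R}^{2n\times 2n}.$$ Then $\Omega(X)\succeq\Omega(Y)$ for all symmetric $X,Y$ with $X\succeq Y\succeq 0$.
   Context: For symmetric $X$: $\Pi_{11}(X)=\sum_{i=1}^r (A_0^i)^{\mathsf T}XA_0^i$, $\Pi_{12}(X)=\sum_{i=1}^r (A_0^i)^{\mathsf T}XB_0^i$, $\Pi_{22}(X)=\sum_{i=1}^r (B_0^i)^{\mathsf T}XB_0^i$; $L_{\mathrm c}(X)=L+\Pi_{12}(X)$, $R_{\mathrm c}(X)=R+\Pi_{22}(X)$, $Q_{\mathrm c}(X)=Q+\Pi_{11}(X)$; $A_{\mathrm c}(X)=A-B[R_{\mathrm c}(X)]^{-1}[L_{\mathrm c}(X)]^{\mathsf T}$, $G_{\mathrm c}(X)=B[R_{\mathrm c}(X)]^{-1}B^{\mathsf T}$, $H_{\mathrm c}(X)=Q_{\mathrm c}(X)-L_{\mathrm c}(X)[R_{\mathrm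 c}(X)]^{-1}[L_{\mathrm c}(X)]^{\mathsf T}$. $\succeq$ is the Loewner order on symmetric matrices. *)

From HB Require Import structures.
From mathcomp Require Import all_boot all_order all_algebra.
Set Implicit Arguments. Unset Strict Implicit. Unset Printing Implicit Defensive.
Import Order.TTheory GRing.Theory Num.Theory.
Local Open Scope ring_scope.

Section Defs.
Variable R : realFieldType.

Definition symmx n (M : 'M[R]_n) : Prop := M^T = M.

Definition psdmx n (M : 'M[R]_n) : Prop :=
  symmx M /\ forall v : 'cV[R]_n, 0 <= (v^T *m M *m v) 0 0.

Definition pdmx n (M : 'M[R]_n) : Prop :=
  symmx M /\ forall v : 'cV[R]_n, v != 0 -> 0 < (v^T *m M *m v) 0 0.

Definition loewner_ge n (M N : 'M[R]_n) : Prop := psdmx (M - N).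

Variables (n m r : nat).
Variables (A Q : 'M[R]_n) (B L : 'M[R]_(n, m)) (Rm : 'M[R]_m).
Variables (A0 : 'I_r -> 'M[R]_n) (B0 : 'I_r -> 'M[R]_(n, m)).

Definition Pi11 (X : 'M[R]_n) : 'M[R]_n := \sum_(i < r) ((A0 i)^T *m X *m A0 i).
Definition Pi12 (X : 'M[R]_n) : 'M[R]_(n, m) := \sum_(i < r) ((A0 i)^T *m X *m B0 i).
Definition Pi22 (X : 'M[R]_n) : 'M[R]_m := \sum_(i < r) ((B0 i)^T *m X *m B0 i).

Definition Lc X := L + Pi12 X.
Definition Rc X := Rm + Pi22 X.
Definition Qc X := Q + Pi11 X.
Definition Ac X := A - B *m invmx (Rc X) *m (Lc X)^T.
Definition Gc X := B *m invmx (Rc X) *m B^T.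
Definition Hc X := Qc X - Lc X *m invmx (Rc X) *m (Lc X)^T.

Definition Omega X : 'M[R]_(n + n) :=
  block_mx (- Gc X) (- Ac X) (- (Ac X)^T) (Hc X).

End Defs.

From HB Require Import structures.
From mathcomp Require Import all_boot all_order all_algebra.
From mathcomp Require Import lra.
Set Implicit Arguments.
Unset Strict Implicit.
Unset Printing Implicit Defensive.
Import Order.TTheory GRing.Theory Num.Theory.
Local Open Scope ring_scope.

(* Writing u = Lc(Z)^T b - B^T a, the quadratic form of Omega(Z) at (a; b) is
   b^T Qc(Z) b - 2 a^T A b - u^T Rc(Z)^-1 u.  Completing the square, this is the
   minimum over w of 2 u^T w + w^T Rc(Z) w + b^T Qc(Z) b - 2 a^T A b, a cost whose
   dependence on Z is the single term sum_i (A0_i b + B0_i w)^T Z (A0_i b + B0_i w),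
   nondecreasing in Z.  With w optimal for X, the form at X is cost_X(w) >= cost_Y(w),
   which bounds the form at Y. *)

Section QuadraticForms.
Variable R : realFieldType.

Lemma addmxE k l (M N : 'M[R]_(k, l)) i j : (M + N) i j = M i j + N i j.
Proof. by rewrite mxE. Qed.

Lemma oppmxE k l (M : 'M[R]_(k, l)) i j : (- M) i j = - M i j.
Proof. by rewrite mxE. Qed.

Lemma mx11_trmx (M : 'M[R]_1) : M^T 0 0 = M 0 0.
Proof. by rewrite mxE. Qed.

Lemma bilin_trmx k l (x : 'cV[R]_k) (M : 'M[R]_(k, l)) (y : 'cV[R]_l) :
  (y^T *m M^T *m x) 0 0 = (x^T *m M *m y) 0 0.
Proof. by rewrite -mx11_trmx !trmx_mul !trmxK mulmxA. Qed.

Lemma bilin_sym k (M : 'M[R]_k) (x y : 'cV[R]_k) :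
  symmx M -> (y^T *m M *m x) 0 0 = (x^T *m M *m y) 0 0.
Proof. by move=> symM; rewrite -[in LHS]symM bilin_trmx. Qed.

Lemma dotmxC k (x y : 'cV[R]_k) : (x^T *m y) 0 0 = (y^T *m x) 0 0.
Proof. by rewrite -mx11_trmx trmx_mul trmxK. Qed.

Lemma bilin_congr_sum k l1 l2 r (C : 'I_r -> 'M[R]_(k, l1)) (D : 'I_r -> 'M[R]_(k, l2))
    (Z : 'M[R]_k) (x : 'cV[R]_l1) (y : 'cV[R]_l2) :
  (x^T *m (\sum_i (C i)^T *m Z *m D i) *m y) 0 0
  = \sum_i ((C i *m x)^T *m Z *m (D i *m y)) 0 0.
Proof.
rewrite mulmx_sumr mulmx_suml summxE; apply: eq_bigr => i _.
by rewrite trmx_mul !mulmxA.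
Qed.

Lemma quad_ge0 k (M : 'M[R]_k) (x : 'cV[R]_k) :
  psdmx M -> 0 <= (x^T *m M *m x) 0 0.
Proof. by case=> _ ->. Qed.

Lemma pdmx_psd k (M : 'M[R]_k) : pdmx M -> psdmx M.
Proof.
case=> symM posM; split=> // x.
have [->|x_neq0] := eqVneq x 0; first by rewrite mulmx0 mxE.
exact/ltW/posM.
Qed.

Lemma psdmxD k (M N : 'M[R]_k) : psdmx M -> psdmx N -> psdmx (M + N).
Proof.
case=> symM posM [symN posN]; split; first by rewrite /symmx linearD /= symM symN.
by move=> x; rewrite mulmxDr mulmxDl addmxE addr_ge0.
Qed.

Lemma pdmxD_psd k (M N : 'M[R]_k) : pdmx M -> psdmx N -> pdmx (M + N).
Proof.
case=> symM posM [symN posN]; split; first by rewrite /symmx linearD /= symM symN.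
by move=> x x_neq0; rewrite mulmxDr mulmxDl addmxE ltr_wpDr ?posN ?posM.
Qed.

Lemma psdmx_congr_sum k l r (C : 'I_r -> 'M[R]_(k, l)) (Z : 'M[R]_k) :
  psdmx Z -> psdmx (\sum_i (C i)^T *m Z *m C i).
Proof.
case=> symZ posZ; split.
  rewrite /symmx raddf_sum; apply: eq_bigr => i _.
  by rewrite /= !trmx_mul trmxK symZ mulmxA.
move=> x; rewrite mulmx_sumr mulmx_suml summxE; apply: sumr_ge0 => i _.
by rewrite !mulmxA -trmx_mul -mulmxA posZ.
Qed.

Lemma pdmx_unit k (M : 'M[R]_k) : pdmx M -> M \in unitmx.
Proof.
case=> _ posM; rewrite unitmxE unitfE; apply/negP => /det0P [v v_neq0 vM0].
have := posM v^T; rewrite trmx_eq0 trmxK vM0 mul0mx mxE ltxx.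
by move/(_ v_neq0).
Qed.

Lemma symmx_invmx k (M : 'M[R]_k) : symmx M -> symmx (invmx M).
Proof. by rewrite /symmx trmx_inv => ->. Qed.

(* Completing the square: [w |-> 2 u^T w + w^T M w] has minimum [- u^T M^-1 u],
   attained at [w = - M^-1 u]. *)
Lemma quad_invmx_le k (M : 'M[R]_k) (u w : 'cV[R]_k) : pdmx M ->
  - (u^T *m invmx M *m u) 0 0 <= 2 * (u^T *m w) 0 0 + (w^T *m M *m w) 0 0.
Proof.
move=> pdM; have [symM _] := pdM; have unitM := pdmx_unit pdM.
have := quad_ge0 (w + invmx M *m u) (pdmx_psd pdM).
rewrite [(w + _)^T]linearD /= !(mulmxDl, mulmxDr) trmx_mul (symmx_invmx symM).
rewrite !mulmxA (mulmxKV unitM) (mulmxK unitM) !addmxE (dotmxC w u).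
lra.
Qed.

Lemma quad_invmx_eq k (M : 'M[R]_k) (u : 'cV[R]_k) : pdmx M ->
  let w := - (invmx M *m u) in
  - (u^T *m invmx M *m u) 0 0 = 2 * (u^T *m w) 0 0 + (w^T *m M *m w) 0 0.
Proof.
move=> pdM w; have [symM _] := pdM; have unitM := pdmx_unit pdM.
rewrite /w [(- _)^T]linearN /= trmx_mul (symmx_invmx symM) !(mulmxN, mulNmx).
rewrite !mulmxA (mulmxKV unitM) !oppmxE.
lra.
Qed.

End QuadraticForms.

Section Omega.
Variables (R : realFieldType) (n m r : nat).
Variables (A Q : 'M[R]_n) (B L : 'M[R]_(n, m)) (Rm : 'M[R]_m).
Variables (A0 : 'I_r -> 'M[R]_n) (B0 : 'I_r -> 'M[R]_(n, m)).
Hypotheses (Rm_pd : pdmx Rm) (Q_sym : symmx Q).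

Local Notation Pi11 := (Pi11 A0).
Local Notation Pi12 := (Pi12 A0 B0).
Local Notation Pi22 := (Pi22 B0).
Local Notation Qc := (Qc Q A0).
Local Notation Lc := (Lc L A0 B0).
Local Notation Rc := (Rc Rm B0).
Local Notation Omega := (Omega A Q B L Rm A0 B0).

Lemma Rc_pd Z : psdmx Z -> pdmx (Rc Z).
Proof. by move=> psdZ; apply: pdmxD_psd Rm_pd (psdmx_congr_sum B0 psdZ). Qed.

Lemma Omega_sym Z : psdmx Z -> symmx (Omega Z).
Proof.
move=> psdZ; have symRi := symmx_invmx (Rc_pd psdZ).1.
have [symPi11 _] := psdmx_congr_sum A0 psdZ.
rewrite /symmx /Omega tr_block_mx ![(- _)^T]linearN /= trmxK; congr block_mx.
  by rewrite /Gc !trmx_mul trmxK symRi mulmxA.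
rewrite /Hc [(_ - _)^T]linearB /= !trmx_mul trmxK symRi mulmxA.
by rewrite [(Qc _)^T]linearD /= Q_sym symPi11.
Qed.

Lemma Omega_quad Z (a b : 'cV[R]_n) : psdmx Z ->
  let u := (Lc Z)^T *m b - B^T *m a in
  ((col_mx a b)^T *m Omega Z *m col_mx a b) 0 0
  = (b^T *m Qc Z *m b) 0 0 - 2 * (a^T *m A *m b) 0 0
    - (u^T *m invmx (Rc Z) *m u) 0 0.
Proof.
move=> psdZ u; have symRi := symmx_invmx (Rc_pd psdZ).1.
rewrite /u /Omega /Gc /Ac /Hc tr_col_mx mul_row_block mul_row_col.
rewrite [(A - _)^T]linearB [(_ - B^T *m a)^T]linearB /= !trmx_mul !trmxK symRi.
rewrite !(mulmxDl, mulmxDr, mulmxBl, mulmxBr, mulNmx, mulmxN) !mulmxA.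
rewrite !(addmxE, oppmxE) bilin_trmx.
lra.
Qed.

Definition Omega_cost Z (a b : 'cV[R]_n) (w : 'cV[R]_m) : R :=
  (b^T *m Qc Z *m b) 0 0 - 2 * (a^T *m A *m b) 0 0
  + 2 * (((Lc Z)^T *m b - B^T *m a)^T *m w) 0 0 + (w^T *m Rc Z *m w) 0 0.

Lemma Omega_quad_le_cost Z a b w : psdmx Z ->
  ((col_mx a b)^T *m Omega Z *m col_mx a b) 0 0 <= Omega_cost Z a b w.
Proof.
move=> psdZ; rewrite Omega_quad // /Omega_cost.
have := quad_invmx_le ((Lc Z)^T *m b - B^T *m a) w (Rc_pd psdZ).
lra.
Qed.

Lemma Omega_quad_eq_cost Z a b : psdmx Z ->
  exists w, ((col_mx a b)^T *m Omega Z *m col_mx a b) 0 0 = Omega_cost Z a b w.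
Proof.
move=> psdZ; eexists; rewrite Omega_quad // /Omega_cost.
have /= := quad_invmx_eq ((Lc Z)^T *m b - B^T *m a) (Rc_pd psdZ).
lra.
Qed.

Lemma Pi_quad Z (b : 'cV[R]_n) (w : 'cV[R]_m) : symmx Z ->
  (b^T *m Pi11 Z *m b) 0 0 + 2 * (b^T *m Pi12 Z *m w) 0 0
    + (w^T *m Pi22 Z *m w) 0 0
  = \sum_i ((A0 i *m b + B0 i *m w)^T *m Z *m (A0 i *m b + B0 i *m w)) 0 0.
Proof.
move=> symZ; rewrite !bilin_congr_sum mulr_sumr -!big_split /=.
apply: eq_bigr => i _; rewrite [(_ + _)^T]linearD /= !(mulmxDl, mulmxDr) !addmxE.
rewrite (bilin_sym (A0 i *m b) (B0 i *m w) symZ).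
lra.
Qed.

Lemma Omega_costE Z a b w : symmx Z ->
  Omega_cost Z a b w
  = (b^T *m Q *m b) 0 0 - 2 * (a^T *m A *m b) 0 0
    + 2 * ((L^T *m b - B^T *m a)^T *m w) 0 0 + (w^T *m Rm *m w) 0 0
    + \sum_i ((A0 i *m b + B0 i *m w)^T *m Z *m (A0 i *m b + B0 i *m w)) 0 0.
Proof.
move=> symZ; rewrite -Pi_quad // /Omega_cost /Qc /Lc /Rc.
rewrite [((L + _)^T *m b - _)^T]linearB [(L^T *m b - _)^T]linearB /= !trmx_mul !trmxK.
rewrite !(mulmxDl, mulmxDr, mulmxBl, mulmxBr) !(addmxE, oppmxE).
lra.
Qed.

Lemma Omega_cost_monotone X Y a b w : symmx X -> symmx Y -> psdmx (X - Y) ->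
  Omega_cost Y a b w <= Omega_cost X a b w.
Proof.
move=> symX symY psdXY; rewrite !Omega_costE // lerD2l; apply: ler_sum => i _.
have := quad_ge0 (A0 i *m b + B0 i *m w) psdXY.
by rewrite mulmxBr mulmxBl addmxE oppmxE subr_ge0.
Qed.

End Omega.

Theorem lemma2p3 (R : realFieldType) (n m r : nat)
  (A Q : 'M[R]_n) (B L : 'M[R]_(n, m)) (Rm : 'M[R]_m)
  (A0 : 'I_r -> 'M[R]_n) (B0 : 'I_r -> 'M[R]_(n, m)) :
  pdmx Rm ->
  psdmx (block_mx Q L L^T Rm) ->
  forall X Y : 'M[R]_n, symmx X -> symmx Y ->
    loewner_ge X Y -> psdmx Y ->
    loewner_ge (Omega A Q B L Rm A0 B0 X) (Omega A Q B L Rm A0 B0 Y).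
Proof.
move=> Rm_pd blk_psd X Y symX symY XY_psd Y_psd.
have Q_sym : symmx Q.
  by case: blk_psd; rewrite /symmx tr_block_mx => /eq_block_mx [].
have X_psd : psdmx X by rewrite -(subrK Y X); apply: psdmxD.
split; first by rewrite /symmx linearB /= !(Omega_sym _ _ _ _ _ Rm_pd Q_sym).
move=> v; rewrite -(vsubmxK v) mulmxBr mulmxBl addmxE oppmxE subr_ge0.
have [w quadX] := Omega_quad_eq_cost A Q B L A0 B0 Rm_pd (usubmx v) (dsubmx v) X_psd.
apply: le_trans (Omega_quad_le_cost A Q B L A0 B0 Rm_pd _ _ w Y_psd) _.
by rewrite quadX Omega_cost_monotone.
Qed.
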